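(* Let $d\ge 2$. There is a constant $C_d$ depending only on $d$ such that for all $r>0$ and $\delta>0$, $$\Bigl|\int_0^{\pi}\Delta_\delta(r\cos\theta)\cos\theta\,(\sin\theta)^{d-2}\,d\theta\Bigr|\le C_d\,\frac{\delta^{(d+1)/2}}{r^{(d-1)/2}}.$$
   Context: For $\delta>0$, $Q_\delta(t):=\delta\lfloor t/\delta+1/2\rfloor$ and $\Delta_\delta(t):=t-Q_\delta(t)$. *)

From Stdlib Require Export Reals.
Open Scope R_scope.

(* floor t = Int_part t (Int_part t = up t - 1 is the greatest integer <= t) *)
Definition floorR (t : R) : R := IZR (Int_part t).

Definition Qd (delta t : R) : R := delta * floorR (t / delta + 1 / 2).

Definition Dd (delta t : R) : R := t - Qd delta t.

Definition integrand (d : nat) (r delta : R) (theta : R) : R :=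
  Dd delta (r * cos theta) * cos theta * (sin theta) ^ (d - 2).

(* After the substitution t = r cos(θ)/δ the integral is δ J(r/δ), with
   J(s) = ∫_0^π saw(s cos θ) cos θ sin^m θ dθ, m = d - 2, and saw the centred sawtooth of
   period 1; so it suffices to show J(s) = O(s^(-(m+1)/2)) for s ≥ 1.  The phase s cos θ is
   stationary at 0 and π, so cut at distance a = s^(-1/2) from both ends: the end pieces are
   trivially O(a^(m+1)).  On [a, π - a] integrate by parts m + 1 times against the periodic
   Bernoulli functions K_j, which are bounded, continuous for j ≥ 1 and satisfy K_(j+1)' = K_j,
   using d/dθ K_(j+1)(s cos θ) = -s sin θ K_j(s cos θ).  Each step gains 1/s and replaces the
   weight g by g'/sin, which costs a factor sin^(-2) ≤ 4s at the cut, so every boundary term is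
   O(s^(-(m+1)/2)); the last integral is bounded through ∫_a^(π-a) sin^(-2) = 2 cot a. *)

From Stdlib Require Import Reals Lra Lia Classical.
Open Scope R_scope.

Lemma real_induction (P : R -> R -> Prop) (a b : R) : a <= b ->
  (forall x y z, a <= x -> x <= y -> y <= z -> z <= b -> P x y -> P y z -> P x z) ->
  (forall x0, a <= x0 <= b -> exists eps, 0 < eps /\
     (forall y, a <= y -> x0 - eps < y -> y <= x0 -> P y x0) /\
     (forall y, y <= b -> x0 <= y -> y < x0 + eps -> P x0 y)) ->
  P a b.
Proof.
  intros Hab Htrans Hloc.
  assert (Paa : P a a).
  { destruct (Hloc a) as [e [He [Hl _]]]; [lra|]. apply Hl; lra. }
  set (E := fun x => a <= x <= b /\ P a x).
  destruct (completeness E) as [m [Hub Hlub]].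
  - exists b. intros x [Hx _]. lra.
  - exists a. split; [lra|exact Paa].
  - assert (Ham : a <= m) by (apply Hub; split; [lra|exact Paa]).
    assert (Hmb : m <= b) by (apply Hlub; intros x [Hx _]; lra).
    destruct (Hloc m) as [e [He [Hl Hr]]]; [lra|].
    assert (Pam : P a m).
    { destruct (Rle_or_lt m a) as [Hma|Hma]; [replace m with a by lra; exact Paa|].
      assert (Hx : exists x, E x /\ m - e < x).
      { apply not_all_not_ex. intro Hn.
        assert (m <= m - Rmin e (m - a)); [|unfold Rmin in *; destruct Rle_dec; lra].
        apply Hlub. intros x Hx.
        destruct (Rle_or_lt x (m - Rmin e (m - a))) as [h|h]; auto.
        exfalso. apply (Hn x). split; auto. unfold Rmin in h; destruct Rle_dec; lra. }
      destruct Hx as [x [[[Hax Hxb] Pax] Hx]].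
      assert (x <= m) by (apply Hub; repeat split; auto).
      apply (Htrans a x m); try lra; auto. }
    destruct (Rle_or_lt b m) as [Hbm|Hbm]; [replace b with m by lra; exact Pam|].
    exfalso. set (y := Rmin (m + e / 2) b).
    assert (Hy : m < y <= b /\ y < m + e) by (unfold y, Rmin; destruct Rle_dec; lra).
    assert (Ey : E y).
    { split; [lra|]. apply (Htrans a m y); try lra; auto. apply Hr; lra. }
    apply Hub in Ey. lra.
Qed.

Lemma Riemann_integrable_zero_open (h : R -> R) (c e : R) : c <= e ->
  (forall x, c < x < e -> h x = 0) -> Riemann_integrable h c e.
Proof.
  intros Hce Hz.
  assert (Hstep : IsStepFun h c e).
  { exists (cons c (cons e nil)), (cons 0 nil). repeat split.
    - intros i Hi. simpl in Hi. replace i with 0%nat by lia. simpl. lra.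
    - simpl. unfold Rmin; destruct Rle_dec; lra.
    - simpl. unfold Rmax; destruct Rle_dec; lra.
    - intros i Hi. simpl in Hi. replace i with 0%nat by lia. exact Hz. }
  intros eps. exists (mkStepFun Hstep), (mkStepFun (StepFun_P4 c e 0)). split.
  - intros t _. simpl. unfold fct_cte. rewrite Rminus_diag, Rabs_R0. lra.
  - rewrite StepFun_P18, Rmult_0_l, Rabs_R0. apply cond_pos.
Qed.

Lemma Riemann_integrable_eq_open (f G : R -> R) (c e : R) : c <= e ->
  (forall x, c <= x <= e -> continuity_pt G x) ->
  (forall x, c < x < e -> f x = G x) -> Riemann_integrable f c e.
Proof.
  intros Hce HG Hf.
  apply (Riemann_integrable_ext (f := fun x => G x + 1 * (f x - G x))); [intros; ring|].
  apply RiemannInt_P10; [exact (continuity_implies_RiemannInt Hce HG)|].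
  apply Riemann_integrable_zero_open; auto. intros x Hx. rewrite Hf; auto; ring.
Qed.

Lemma RiemannInt_FTC_open (G Phi : R -> R) (c e : R) (pr : Riemann_integrable G c e) :
  c <= e ->
  (forall x, c <= x <= e -> continuity_pt G x) ->
  (forall x, c <= x <= e -> continuity_pt Phi x) ->
  (forall x, c < x < e -> derivable_pt_lim Phi x (G x)) ->
  RiemannInt pr = Phi e - Phi c.
Proof.
  intros Hce HG HPhi HD.
  set (P := primitive Hce (FTC_P1 Hce HG)).
  rewrite (RiemannInt_P20 Hce (FTC_P1 Hce HG) pr). fold P.
  assert (HP : forall x, c <= x <= e -> derivable_pt_lim P x (G x))
    by (intros x Hx; apply RiemannInt_P28; auto).
  set (Psi := fun x => P x - Phi x).
  assert (Hd : forall x, c < x < e -> derivable_pt_lim Psi x 0).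
  { intros x Hx. replace 0 with (G x - G x) by ring.
    apply derivable_pt_lim_minus; [apply HP; lra | auto]. }
  assert (prd : forall x, c < x < e -> derivable_pt Psi x) by (intros x Hx; exists 0; apply Hd; auto).
  assert (Hc : forall x, c <= x <= e -> continuity_pt Psi x).
  { intros x Hx. apply continuity_pt_minus; auto.
    apply derivable_continuous_pt. exists (G x). apply HP; auto. }
  assert (Hconst := null_derivative_loc Psi c e prd Hc
                      (fun x Px => derive_pt_eq_0 _ _ _ _ (Hd x Px))).
  specialize (Hconst e ltac:(lra)). unfold Psi in Hconst. lra.
Qed.

Lemma RiemannInt_FTC_eq_open (f G Phi : R -> R) (c e : R) : c <= e ->
  (forall x, c <= x <= e -> continuity_pt G x) ->
  (forall x, c <= x <= e -> continuity_pt Phi x) ->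
  (forall x, c < x < e -> f x = G x /\ derivable_pt_lim Phi x (f x)) ->
  exists pr : Riemann_integrable f c e, RiemannInt pr = Phi e - Phi c.
Proof.
  intros Hce HG HPhi Hf.
  exists (Riemann_integrable_eq_open f G c e Hce HG (fun x Hx => proj1 (Hf x Hx))).
  rewrite (RiemannInt_P18 _ (continuity_implies_RiemannInt Hce HG) Hce)
    by (intros x Hx; apply Hf; auto).
  apply RiemannInt_FTC_open; auto.
  intros x Hx. destruct (Hf x Hx) as [<- ?]. auto.
Qed.

Definition piecewise_continuous (f : R -> R) (a b : R) : Prop :=
  forall x0, a <= x0 <= b -> exists eps, 0 < eps /\ exists Gl Gr : R -> R,
    (forall x, a <= x <= b -> continuity_pt Gl x /\ continuity_pt Gr x) /\
    (forall x, a < x -> x0 - eps < x < x0 -> f x = Gl x) /\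
    (forall x, x < b -> x0 < x < x0 + eps -> f x = Gr x).

Lemma piecewise_continuous_integrable (f : R -> R) (a b : R) : a <= b ->
  piecewise_continuous f a b -> inhabited (Riemann_integrable f a b).
Proof.
  intros Hab Hpw.
  apply (real_induction (fun x y => inhabited (Riemann_integrable f x y)) a b Hab).
  - intros x y z _ _ _ _ [p1] [p2]. constructor. exact (RiemannInt_P24 p1 p2).
  - intros x0 Hx0. destruct (Hpw x0 Hx0) as [eps [He [Gl [Gr [HG [Hl Hr]]]]]].
    exists eps; split; auto. split.
    + intros y Hay Hy1 Hy2. constructor. apply (Riemann_integrable_eq_open f Gl y x0 Hy2).
      * intros; apply HG; lra.
      * intros x Hx; apply Hl; lra.
    + intros y Hyb Hy1 Hy2. constructor. apply (Riemann_integrable_eq_open f Gr x0 y Hy1).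
      * intros; apply HG; lra.
      * intros x Hx; apply Hr; lra.
Qed.

Lemma RiemannInt_FTC_piecewise (f Phi : R -> R) (a b : R) : a <= b ->
  piecewise_continuous f a b ->
  (forall x, a <= x <= b -> continuity_pt Phi x) ->
  (forall x0, a <= x0 <= b -> exists eps, 0 < eps /\
     forall x, a < x < b -> 0 < Rabs (x - x0) < eps -> derivable_pt_lim Phi x (f x)) ->
  exists pr : Riemann_integrable f a b, RiemannInt pr = Phi b - Phi a.
Proof.
  intros Hab Hpw HPhi HD.
  apply (real_induction
    (fun x y => exists pr : Riemann_integrable f x y, RiemannInt pr = Phi y - Phi x) a b Hab).
  - intros x y z _ _ _ _ [p1 H1] [p2 H2].
    exists (RiemannInt_P24 p1 p2). rewrite <- (RiemannInt_P26 p1 p2). lra.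
  - intros x0 Hx0. destruct (Hpw x0 Hx0) as [e1 [He1 [Gl [Gr [HG [Hl Hr]]]]]].
    destruct (HD x0 Hx0) as [e2 [He2 HD0]].
    exists (Rmin e1 e2). split; [apply Rmin_glb_lt; auto|].
    assert (Hm := Rmin_l e1 e2). assert (Hm' := Rmin_r e1 e2).
    split; intros y Hy1 Hy2 Hy3.
    + apply (RiemannInt_FTC_eq_open f Gl Phi y x0); try lra.
      * intros; apply HG; lra.
      * intros; apply HPhi; lra.
      * intros x Hx. split; [apply Hl; lra|]. apply HD0; [lra|].
        rewrite Rabs_left by lra. lra.
    + apply (RiemannInt_FTC_eq_open f Gr Phi x0 y); try lra.
      * intros; apply HG; lra.
      * intros; apply HPhi; lra.
      * intros x Hx. split; [apply Hr; lra|]. apply HD0; [lra|].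
        rewrite Rabs_right by lra. lra.
Qed.

Lemma RiemannInt_scal (f : R -> R) (a b c : R) (pr1 : Riemann_integrable f a b)
  (pr2 : Riemann_integrable (fun x => c * f x) a b) : a <= b -> RiemannInt pr2 = c * RiemannInt pr1.
Proof.
  intros Hab. set (pr3 := RiemannInt_P10 c (RiemannInt_P14 a b 0) pr1).
  rewrite (RiemannInt_P18 pr2 pr3 Hab) by (intros; unfold fct_cte; ring).
  rewrite (RiemannInt_P13 (RiemannInt_P14 a b 0) pr1 pr3), RiemannInt_P15. ring.
Qed.

Lemma RiemannInt_abs_le (f g : R -> R) (a b : R) (pr : Riemann_integrable f a b)
  (prg : Riemann_integrable g a b) : a <= b ->
  (forall x, a < x < b -> Rabs (f x) <= g x) -> Rabs (RiemannInt pr) <= RiemannInt prg.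
Proof.
  intros Hab Hfg. eapply Rle_trans; [apply (RiemannInt_P17 pr (RiemannInt_P16 pr) Hab)|].
  apply RiemannInt_P19; auto.
Qed.

Lemma RiemannInt_abs_const_bound (f : R -> R) (a b M : R) (pr : Riemann_integrable f a b) :
  a <= b -> (forall x, a < x < b -> Rabs (f x) <= M) -> Rabs (RiemannInt pr) <= M * (b - a).
Proof.
  intros Hab Hf. rewrite <- (RiemannInt_P15 (RiemannInt_P14 a b M)).
  apply RiemannInt_abs_le; auto.
Qed.

Definition poly_eval (a : nat -> R) (N : nat) (y : R) : R := sum_f_R0 (fun i => a i * y ^ i) N.

Definition poly_prim (a : nat -> R) (c : R) (i : nat) : R :=
  match i with O => c | S i' => a i' / INR (S i') end.

Lemma poly_eval_S a N : poly_eval a (S N) = fun y => poly_eval a N y + a (S N) * y ^ S N.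
Proof. reflexivity. Qed.

Lemma poly_eval_continuous a N : continuity (poly_eval a N).
Proof.
  assert (Hmono : forall k n, continuity (fun y => k * y ^ n)).
  { intros k n. apply continuity_scal, derivable_continuous, derivable_pow. }
  induction N as [|N IH]; [apply Hmono|].
  rewrite poly_eval_S. apply continuity_plus; auto.
Qed.

Lemma poly_prim_derive a c N y :
  derivable_pt_lim (poly_eval (poly_prim a c) (S N)) y (poly_eval a N y).
Proof.
  induction N as [|N IH]; rewrite poly_eval_S.
  - replace (poly_eval a 0 y)
      with (c * (INR 0 * y ^ pred 0) + poly_prim a c 1 * (INR 1 * y ^ pred 1))
      by (unfold poly_eval; simpl; field).
    apply derivable_pt_lim_plus; apply derivable_pt_lim_scal, derivable_pt_lim_pow.
  - replace (poly_eval a (S N) y)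
      with (poly_eval a N y + poly_prim a c (S (S N)) * (INR (S (S N)) * y ^ pred (S (S N)))).
    + apply derivable_pt_lim_plus; [exact IH|].
      apply derivable_pt_lim_scal, derivable_pt_lim_pow.
    + rewrite poly_eval_S. simpl pred. unfold poly_prim. field. apply not_0_INR. lia.
Qed.

Lemma poly_eval_prim_const a c N y :
  poly_eval (poly_prim a c) N y = c + poly_eval (poly_prim a 0) N y.
Proof.
  induction N as [|N IH]; [unfold poly_eval; simpl; ring|].
  rewrite !poly_eval_S, IH. simpl. ring.
Qed.

Lemma poly_eval_prim_prim_const a c N y :
  poly_eval (poly_prim (poly_prim a c) 0) (S N) y
  = poly_eval (poly_prim (poly_prim a 0) 0) (S N) y + c * y.
Proof.
  induction N as [|N IH]; [unfold poly_eval; simpl; field|].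
  rewrite (poly_eval_S _ (S N)), (poly_eval_S (poly_prim (poly_prim a 0) 0) (S N)), IH.
  simpl. ring.
Qed.

Lemma poly_eval_bound a N y : Rabs y <= 1 ->
  Rabs (poly_eval a N y) <= sum_f_R0 (fun i => Rabs (a i)) N.
Proof.
  intros Hy. induction N as [|N IH].
  - unfold poly_eval. simpl. rewrite Rmult_1_r. lra.
  - rewrite poly_eval_S. simpl sum_f_R0.
    eapply Rle_trans; [apply Rabs_triang|]. apply Rplus_le_compat; auto.
    rewrite Rabs_mult, <- RPow_abs.
    rewrite <- (Rmult_1_r (Rabs (a (S N)))) at 2.
    apply Rmult_le_compat_l; [apply Rabs_pos|].
    rewrite <- (pow1 (S N)). apply pow_incr. split; [apply Rabs_pos | exact Hy].
Qed.

(* [bern j y = B_(j+1)(y + 1/2) / (j+1)!]: each new constant of integration is chosen so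
   that the next antiderivative takes equal values at [1/2] and [-1/2]. *)
Definition bern_defect (a : nat -> R) (N : nat) : R :=
  poly_eval (poly_prim (poly_prim a 0) 0) (S (S N)) (1/2)
  - poly_eval (poly_prim (poly_prim a 0) 0) (S (S N)) (-1/2).

Fixpoint bern_coef (j : nat) : nat -> R :=
  match j with
  | O => fun i => match i with 1%nat => 1 | _ => 0 end
  | S j' => poly_prim (bern_coef j') (- bern_defect (bern_coef j') (S j'))
  end.

Definition bern (j : nat) (y : R) : R := poly_eval (bern_coef j) (S j) y.

Lemma bern_0 y : bern 0 y = y.
Proof. unfold bern, poly_eval. cbn [sum_f_R0 pow bern_coef]. ring. Qed.

Lemma bern_derive j y : derivable_pt_lim (bern (S j)) y (bern j y).
Proof. apply poly_prim_derive. Qed.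

Lemma bern_continuous j : continuity (bern j).
Proof. apply poly_eval_continuous. Qed.

Lemma bern_half_sym j : bern (S j) (1/2) = bern (S j) (-1/2).
Proof.
  unfold bern.
  change (bern_coef (S j)) with (poly_prim (bern_coef j) (- bern_defect (bern_coef j) (S j))).
  rewrite (poly_eval_prim_const _ _ _ (1/2)), (poly_eval_prim_const _ _ _ (-1/2)). f_equal.
  destruct j as [|j].
  - unfold poly_eval, poly_prim, bern_coef. cbn [sum_f_R0 pow]. simpl INR. field.
  - change (bern_coef (S j)) with (poly_prim (bern_coef j) (- bern_defect (bern_coef j) (S j))).
    rewrite (poly_eval_prim_prim_const _ _ _ (1/2)), (poly_eval_prim_prim_const _ _ _ (-1/2)).
    unfold bern_defect. lra.
Qed.

Lemma bern_bounded j : exists B, 0 <= B /\ forall y, Rabs y <= 1 -> Rabs (bern j y) <= B.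
Proof.
  exists (sum_f_R0 (fun i => Rabs (bern_coef j i)) (S j)). split.
  - apply cond_pos_sum. intro; apply Rabs_pos.
  - intros y Hy. apply poly_eval_bound; auto.
Qed.

Definition saw (x : R) : R := x - IZR (Int_part (x + 1/2)).

Lemma Dd_saw delta t : 0 < delta -> Dd delta t = delta * saw (t / delta).
Proof. intros H. unfold Dd, Qd, floorR, saw. field. lra. Qed.

Lemma saw_range x : -1/2 <= saw x < 1/2.
Proof. unfold saw. destruct (base_Int_part (x + 1/2)). lra. Qed.

Lemma Int_part_eq (z : Z) (t : R) : IZR z <= t < IZR z + 1 -> Int_part t = z.
Proof.
  intros [H1 H2]. unfold Int_part.
  rewrite <- (tech_up t (z + 1)); [ring | rewrite plus_IZR; simpl; lra ..].
Qed.

Lemma saw_local x0 : exists eps, 0 < eps /\ exists nl nr : R,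
  (forall y, x0 - eps < y < x0 -> saw y = y - nl) /\
  (forall y, x0 <= y < x0 + eps -> saw y = y - nr) /\
  (nl = nr \/ (x0 - nl = 1/2 /\ x0 - nr = -1/2)).
Proof.
  set (n := Int_part (x0 + 1/2)). destruct (base_Int_part (x0 + 1/2)) as [H1 H2].
  fold n in H1, H2. unfold saw.
  destruct (Req_dec (IZR n) (x0 + 1/2)) as [Heq|Hne].
  - exists (1/2). split; [lra|]. exists (IZR (n - 1)), (IZR n). rewrite minus_IZR. simpl.
    repeat split.
    + intros y Hy. rewrite (Int_part_eq (n - 1)); [rewrite minus_IZR; reflexivity|].
      rewrite minus_IZR. simpl. lra.
    + intros y Hy. rewrite (Int_part_eq n); [reflexivity | lra].
    + right; split; lra.
  - set (eps := Rmin (x0 + 1/2 - IZR n) (IZR n + 1 - (x0 + 1/2))).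
    assert (He : 0 < eps /\ eps <= x0 + 1/2 - IZR n /\ eps <= IZR n + 1 - (x0 + 1/2))
      by (unfold eps, Rmin; destruct Rle_dec; lra).
    exists eps. split; [lra|]. exists (IZR n), (IZR n).
    repeat split; try (left; reflexivity);
      intros y Hy; rewrite (Int_part_eq n); [reflexivity | lra | reflexivity | lra].
Qed.

Definition per_bern (j : nat) (x : R) : R := bern j (saw x).

Lemma per_bern_bounded j : exists B, 0 <= B /\ forall x, Rabs (per_bern j x) <= B.
Proof.
  destruct (bern_bounded j) as [B [HB H]]. exists B. split; auto.
  intros x. apply H. destruct (saw_range x). apply Rabs_le. lra.
Qed.

Lemma continuity_pt_eps (f : R -> R) (x0 : R) : continuity_pt f x0 ->
  forall eps, 0 < eps -> exists del, 0 < del /\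
    forall x, Rabs (x - x0) < del -> Rabs (f x - f x0) < eps.
Proof.
  intros H eps Heps. destruct (H eps Heps) as [del [Hd Hx]].
  exists del. split; [lra|]. intros x Hx1.
  destruct (Req_dec x x0) as [->|Hne].
  - rewrite Rminus_diag, Rabs_R0. lra.
  - apply (Hx x). split; [split; [exact I | auto] | exact Hx1].
Qed.

Lemma continuity_pt_glue (f Pl Pr : R -> R) (x0 eps : R) : 0 < eps ->
  continuity_pt Pl x0 -> continuity_pt Pr x0 -> Pl x0 = f x0 -> Pr x0 = f x0 ->
  (forall y, x0 - eps < y < x0 -> f y = Pl y) ->
  (forall y, x0 <= y < x0 + eps -> f y = Pr y) -> continuity_pt f x0.
Proof.
  intros He Cl Cr El Er Hl Hr e0 He0.
  destruct (continuity_pt_eps _ _ Cl e0 He0) as [d1 [Hd1 H1]].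
  destruct (continuity_pt_eps _ _ Cr e0 He0) as [d2 [Hd2 H2]].
  exists (Rmin eps (Rmin d1 d2)). split; [repeat apply Rmin_glb_lt; lra|].
  intros x [_ Hx]. simpl in Hx. unfold Rdist in *.
  assert (Hx1 := Rlt_le_trans _ _ _ Hx (Rmin_l _ _)).
  assert (Hx2 := Rlt_le_trans _ _ _ Hx (Rle_trans _ _ _ (Rmin_r _ _) (Rmin_l _ _))).
  assert (Hx3 := Rlt_le_trans _ _ _ Hx (Rle_trans _ _ _ (Rmin_r _ _) (Rmin_r _ _))).
  apply Rabs_def2 in Hx1.
  destruct (Rlt_or_le x x0) as [Hlt|Hge].
  - simpl. unfold Rdist. rewrite Hl, <- El by lra. auto.
  - simpl. unfold Rdist. rewrite Hr, <- Er by lra. auto.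
Qed.

Lemma per_bern_continuous j x : continuity_pt (per_bern (S j)) x.
Proof.
  assert (Hshift : forall c, continuity_pt (fun y => bern (S j) (y - c)) x).
  { intros c. apply (continuity_pt_comp (fun y => y - c)); [|apply bern_continuous].
    apply derivable_continuous_pt, derivable_pt_minus; [apply derivable_pt_id | apply derivable_pt_const]. }
  destruct (saw_local x) as [eps [He [nl [nr [Hl [Hr Hjump]]]]]].
  apply (continuity_pt_glue _ (fun y => bern (S j) (y - nl)) (fun y => bern (S j) (y - nr)) x eps);
    auto; unfold per_bern.
  - rewrite (Hr x) by lra. destruct Hjump as [->|[E1 E2]]; auto.
    rewrite E1, E2. apply bern_half_sym.
  - rewrite (Hr x) by lra. reflexivity.
  - intros y Hy. rewrite Hl; auto.
  - intros y Hy. rewrite Hr; auto.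
Qed.

Lemma saw_cos_local s th0 : 0 < s -> 0 <= th0 <= PI -> exists eta, 0 < eta /\ exists nl nr : R,
  (forall th, 0 < th -> th0 - eta < th < th0 -> saw (s * cos th) = s * cos th - nr) /\
  (forall th, th < PI -> th0 < th < th0 + eta -> saw (s * cos th) = s * cos th - nl).
Proof.
  intros Hs Hth0. destruct (saw_local (s * cos th0)) as [eps [He [nl [nr [Hl [Hr _]]]]]].
  assert (Hc : continuity_pt (fun t => s * cos t) th0)
    by apply derivable_continuous_pt, derivable_pt_scal, derivable_pt_cos.
  destruct (continuity_pt_eps _ _ Hc eps He) as [eta [Heta Hnear]].
  exists eta. split; auto. exists nl, nr.
  split; intros th Hth Hrange; [apply Hr | apply Hl];
    assert (H1 := Hnear th ltac:(apply Rabs_def1; lra)); apply Rabs_def2 in H1.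
  - assert (cos th0 < cos th) by (apply cos_decreasing_1; lra). nra.
  - assert (cos th < cos th0) by (apply cos_decreasing_1; lra). nra.
Qed.

Lemma per_bern_cos_continuous j s x : continuity_pt (fun t => per_bern (S j) (s * cos t)) x.
Proof.
  apply (continuity_pt_comp (fun t => s * cos t)); [|apply per_bern_continuous].
  apply derivable_continuous_pt, derivable_pt_scal, derivable_pt_cos.
Qed.

Lemma bern_cos_derive j s c x :
  derivable_pt_lim (fun t => bern (S j) (s * cos t - c)) x (bern j (s * cos x - c) * (s * - sin x)).
Proof.
  apply (derivable_pt_lim_comp (fun t => s * cos t - c)); [|apply bern_derive].
  replace (s * - sin x) with (s * - sin x - 0) by ring.
  apply (derivable_pt_lim_minus (fun t => s * cos t)); [|apply derivable_pt_lim_const].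
  apply derivable_pt_lim_scal, derivable_pt_lim_cos.
Qed.

Section IntegrationByParts.

Variables (j : nat) (s al be : R) (g gd : R -> R).
Hypotheses (Hs : 0 < s) (Hal : 0 < al) (Hab : al <= be) (Hbe : be < PI)
  (Hg : forall th, al <= th <= be -> derivable_pt_lim g th (gd th))
  (Hgd : forall th, al <= th <= be -> continuity_pt gd th).

Let g_continuous th : al <= th <= be -> continuity_pt g th.
Proof. intros Hth. apply derivable_continuous_pt. exists (gd th). apply Hg; auto. Qed.

Let F th := per_bern j (s * cos th) * (g th * sin th) - / s * (per_bern (S j) (s * cos th) * gd th).
Let Phi th := - / s * (per_bern (S j) (s * cos th) * g th).
Let piece n th := bern j (s * cos th - n) * (g th * sin th) - / s * (bern (S j) (s * cos th - n) * gd th).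

Let piece_continuous n th : al <= th <= be -> continuity_pt (piece n) th.
Proof.
  intros Hth.
  assert (Hb : forall k, continuity_pt (fun t => bern k (s * cos t - n)) th).
  { intros k. apply (continuity_pt_comp (fun t => s * cos t - n)); [|apply bern_continuous].
    apply derivable_continuous_pt, derivable_pt_minus;
      [apply derivable_pt_scal, derivable_pt_cos | apply derivable_pt_const]. }
  apply continuity_pt_minus; [|apply continuity_pt_scal]; apply continuity_pt_mult; auto.
  apply continuity_pt_mult; [apply g_continuous; auto | apply continuity_sin].
Qed.

Let ibp_local n u v x : al <= u -> v <= be ->
  (forall th, u < th < v -> saw (s * cos th) = s * cos th - n) -> u < x < v ->
  F x = piece n x /\ derivable_pt_lim Phi x (F x).
Proof.
  intros Hu Hv Hsaw Hx. unfold F, Phi, piece, per_bern. rewrite !Hsaw by auto.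
  split; [reflexivity|].
  apply (derivable_pt_lim_locally_ext (fun th => - / s * (bern (S j) (s * cos th - n) * g th)))
    with u v; auto.
  { intros th Hth. rewrite Hsaw; auto. }
  replace (bern j (s * cos x - n) * (g x * sin x) - / s * (bern (S j) (s * cos x - n) * gd x))
    with (- / s * (bern j (s * cos x - n) * (s * - sin x) * g x + bern (S j) (s * cos x - n) * gd x))
    by (field; lra).
  apply derivable_pt_lim_scal, (derivable_pt_lim_mult (fun t => bern (S j) (s * cos t - n)));
    [apply bern_cos_derive | apply Hg; lra].
Qed.

Let ibp_near x0 : al <= x0 <= be -> exists eta, 0 < eta /\ exists nl nr : R,
  (forall x, al < x -> x0 - eta < x < x0 -> F x = piece nr x /\ derivable_pt_lim Phi x (F x)) /\
  (forall x, x < be -> x0 < x < x0 + eta -> F x = piece nl x /\ derivable_pt_lim Phi x (F x)).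
Proof.
  intros Hx0. destruct (saw_cos_local s x0 Hs ltac:(lra)) as [eta [Heta [nl [nr [HL HR]]]]].
  exists eta. split; auto. exists nl, nr.
  assert (Hmax := Rmax_l (x0 - eta) al). assert (Hmax' := Rmax_r (x0 - eta) al).
  assert (Hmin := Rmin_l (x0 + eta) be). assert (Hmin' := Rmin_r (x0 + eta) be).
  split; intros x Hx1 Hx2.
  - apply (ibp_local nr (Rmax (x0 - eta) al) x0); auto; try lra.
    + intros th Hth. apply HL; lra.
    + split; [apply Rmax_lub_lt|]; lra.
  - apply (ibp_local nl x0 (Rmin (x0 + eta) be)); auto; try lra.
    + intros th Hth. apply HR; lra.
    + split; [|apply Rmin_glb_lt]; lra.
Qed.

Let F_primitive : exists pr : Riemann_integrable F al be, RiemannInt pr = Phi be - Phi al.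
Proof.
  apply RiemannInt_FTC_piecewise; auto.
  - intros x0 Hx0. destruct (ibp_near x0 Hx0) as [eta [Heta [nl [nr [HL HR]]]]].
    exists eta. split; auto. exists (piece nr), (piece nl).
    split; [intros; split; apply piece_continuous; auto|].
    split; intros x Hx1 Hx2; [apply HL | apply HR]; auto.
  - intros x Hx. apply continuity_pt_scal, continuity_pt_mult;
      [apply per_bern_cos_continuous | apply g_continuous; auto].
  - intros x0 Hx0. destruct (ibp_near x0 Hx0) as [eta [Heta [nl [nr [HL HR]]]]].
    exists eta. split; auto. intros x Hx Hd.
    destruct (Rlt_or_le x x0) as [Hlt|Hge].
    + rewrite Rabs_left in Hd by lra. apply HL; lra.
    + rewrite Rabs_right in Hd by lra. apply HR; lra.
Qed.

Lemma ibp_per_bern :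
  exists pr1 : Riemann_integrable (fun th => per_bern j (s * cos th) * (g th * sin th)) al be,
  exists pr2 : Riemann_integrable (fun th => per_bern (S j) (s * cos th) * gd th) al be,
  RiemannInt pr1 = / s * (per_bern (S j) (s * cos al) * g al - per_bern (S j) (s * cos be) * g be)
                   + / s * RiemannInt pr2.
Proof.
  destruct F_primitive as [prF HF].
  assert (pr2 : Riemann_integrable (fun th => per_bern (S j) (s * cos th) * gd th) al be).
  { apply continuity_implies_RiemannInt; auto. intros x Hx.
    apply continuity_pt_mult; [apply per_bern_cos_continuous | auto]. }
  set (pr3 := RiemannInt_P10 (/ s) prF pr2).
  assert (Hext : forall x, F x + / s * (per_bern (S j) (s * cos x) * gd x)
                           = per_bern j (s * cos x) * (g x * sin x))
    by (intros; unfold F; ring).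
  exists (@Riemann_integrable_ext _ _ _ _ (fun x _ => Hext x) pr3), pr2.
  rewrite (RiemannInt_P18 _ pr3 Hab) by (intros; symmetry; apply Hext).
  rewrite (RiemannInt_P13 prF pr2), HF. unfold Phi. ring.
Qed.

End IntegrationByParts.

(* [(c, i, e)] stands for [c cos^i sin^e]; the exponent of [sin] is real because it becomes
   negative after a few steps. *)
Definition trig_mono : Type := (R * nat * R)%type.

Definition mono_eval (mo : trig_mono) (t : R) : R :=
  let '(c, i, e) := mo in c * cos t ^ i * Rpower (sin t) e.

Fixpoint trig_eval (L : list trig_mono) (t : R) : R :=
  match L with nil => 0 | cons mo L' => mono_eval mo t + trig_eval L' t end.

(* [(1 / sin) d/dt] of a monomial, valid on [(0, PI)] *)
Definition mono_dsin (mo : trig_mono) : list trig_mono :=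
  let '(c, i, e) := mo in cons (- c * INR i, pred i, e) (cons (c * e, S i, e - 2) nil).

Fixpoint trig_dsin (L : list trig_mono) : list trig_mono :=
  match L with nil => nil | cons mo L' => mono_dsin mo ++ trig_dsin L' end.

Fixpoint coef_abs_sum (L : list trig_mono) : R :=
  match L with nil => 0 | cons (c, _, _) L' => Rabs c + coef_abs_sum L' end.

Fixpoint sin_exp_ge (E : R) (L : list trig_mono) : Prop :=
  match L with nil => True | cons (_, _, e) L' => E <= e /\ sin_exp_ge E L' end.

Lemma trig_eval_app L1 L2 t : trig_eval (L1 ++ L2) t = trig_eval L1 t + trig_eval L2 t.
Proof. induction L1 as [|mo L1 IH]; simpl; [ring | rewrite IH; ring]. Qed.

Lemma mono_eval_derive mo x : 0 < x < PI ->
  derivable_pt_lim (mono_eval mo) x (trig_eval (mono_dsin mo) x * sin x).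
Proof.
  intros Hx. assert (Hs : 0 < sin x) by (apply sin_gt_0; lra).
  destruct mo as [[c i] e].
  replace (trig_eval (mono_dsin (c, i, e)) x * sin x)
    with (c * (INR i * cos x ^ pred i * - sin x) * Rpower (sin x) e
          + c * cos x ^ i * (e * Rpower (sin x) (e - 1) * cos x)).
  - apply (derivable_pt_lim_mult (fun t => c * cos t ^ i) (fun t => Rpower (sin t) e)).
    + apply derivable_pt_lim_scal.
      apply (derivable_pt_lim_comp cos (fun y => y ^ i));
        [apply derivable_pt_lim_cos | apply derivable_pt_lim_pow].
    + apply (derivable_pt_lim_comp sin (fun y => Rpower y e));
        [apply derivable_pt_lim_sin | apply derivable_pt_lim_power; auto].
  - cbn [trig_eval mono_dsin mono_eval].
    replace (e - 1) with ((e - 2) + 1) by ring. rewrite Rpower_plus, Rpower_1 by auto.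
    simpl pow. ring.
Qed.

Lemma trig_eval_derive L x : 0 < x < PI ->
  derivable_pt_lim (trig_eval L) x (trig_eval (trig_dsin L) x * sin x).
Proof.
  intros Hx. induction L as [|mo L IH].
  - simpl. rewrite Rmult_0_l. apply derivable_pt_lim_const.
  - simpl trig_dsin. rewrite trig_eval_app, Rmult_plus_distr_r.
    apply (derivable_pt_lim_plus (mono_eval mo)); auto. apply mono_eval_derive; auto.
Qed.

Lemma trig_eval_continuous L x : 0 < x < PI -> continuity_pt (trig_eval L) x.
Proof. intros Hx. apply derivable_continuous_pt. eexists. apply trig_eval_derive; auto. Qed.

Lemma Rpower_le_of_le_1 x e E : 0 < x <= 1 -> E <= e -> Rpower x e <= Rpower x E.
Proof.
  intros Hx He. unfold Rpower.
  assert (Hln : ln x <= 0).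
  { destruct (Req_dec x 1) as [->|Hne]; [rewrite ln_1; lra|].
    rewrite <- ln_1. left. apply ln_increasing; lra. }
  destruct (Req_dec (e * ln x) (E * ln x)) as [Heq|Hne]; [rewrite Heq; lra|].
  left. apply exp_increasing. nra.
Qed.

Lemma Rpower_pos x e : 0 < Rpower x e.
Proof. apply exp_pos. Qed.

Lemma trig_eval_bound L E x : sin_exp_ge E L -> 0 < x < PI ->
  Rabs (trig_eval L x) <= coef_abs_sum L * Rpower (sin x) E.
Proof.
  intros HE Hx. assert (Hs : 0 < sin x) by (apply sin_gt_0; lra).
  assert (Hs1 := SIN_bound x).
  induction L as [|[[c i] e] L IH]; simpl.
  - rewrite Rabs_R0. lra.
  - destruct HE as [He HE]. eapply Rle_trans; [apply Rabs_triang|].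
    rewrite Rmult_plus_distr_r. apply Rplus_le_compat; auto.
    rewrite !Rabs_mult, (Rabs_right (Rpower _ _)) by (left; apply Rpower_pos).
    rewrite Rmult_assoc. apply Rmult_le_compat_l; [apply Rabs_pos|].
    rewrite <- (Rmult_1_l (Rpower (sin x) E)).
    apply Rmult_le_compat; [apply Rabs_pos | left; apply Rpower_pos | |].
    + rewrite <- RPow_abs, <- (pow1 i). apply pow_incr.
      split; [apply Rabs_pos | apply Rabs_le, COS_bound].
    + apply Rpower_le_of_le_1; auto. lra.
Qed.

Lemma coef_abs_sum_nonneg L : 0 <= coef_abs_sum L.
Proof.
  induction L as [|[[c i] e] L IH]; simpl; [lra|].
  assert (0 <= Rabs c) by apply Rabs_pos. lra.
Qed.

Lemma trig_dsin_exp_ge E L : sin_exp_ge E L -> sin_exp_ge (E - 2) (trig_dsin L).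
Proof.
  induction L as [|[[c i] e] L IH]; simpl; auto.
  intros [He HL]. repeat split; try lra. auto.
Qed.

(* [trig_eval (sin_weight m j)] is [((1 / sin) d/dt)^j (cos sin^(m-1))], so that
   [sin_weight m j * sin] is the weight met after [j] integrations by parts. *)
Fixpoint sin_weight (m j : nat) : list trig_mono :=
  match j with
  | O => cons (1, 1%nat, INR m - 1) nil
  | S j' => trig_dsin (sin_weight m j')
  end.

Lemma sin_weight_exp_ge m j : sin_exp_ge (INR m - 1 - 2 * INR j) (sin_weight m j).
Proof.
  induction j as [|j IH]; [simpl; lra|].
  rewrite S_INR. replace (INR m - 1 - 2 * (INR j + 1)) with (INR m - 1 - 2 * INR j - 2) by ring.
  apply trig_dsin_exp_ge; auto.
Qed.

Lemma sin_weight_0 m x : 0 < x < PI -> trig_eval (sin_weight m 0) x * sin x = cos x * sin x ^ m.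
Proof.
  intros Hx. assert (Hs : 0 < sin x) by (apply sin_gt_0; lra). simpl.
  rewrite <- Rpower_pow by auto. rewrite <- (Rpower_1 (sin x)) at 2 by auto.
  replace (INR m) with ((INR m - 1) + 1) at 2 by ring. rewrite Rpower_plus. ring.
Qed.

Lemma sin_ge_half a : 0 <= a <= 1 -> a / 2 <= sin a.
Proof.
  intros Ha. assert (HPI := PI2_1).
  destruct (sin_bound a 0) as [H _]; try lra.
  eapply Rle_trans; [|exact H]. unfold sin_approx, sin_term. simpl. nra.
Qed.

Lemma Rpower_sin_le a e : 0 < a <= 1 -> Rpower (sin a) e <= Rpower 2 (Rabs e) * Rpower a e.
Proof.
  intros Ha.
  assert (Hs1 := sin_ge_half a ltac:(lra)).
  assert (Hs2 : sin a <= a) by (apply Rlt_le, sin_lt_x; lra).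
  assert (Hln2 : 0 < ln 2) by (rewrite <- ln_1; apply ln_increasing; lra).
  assert (ln_le : forall x y, 0 < x <= y -> ln x <= ln y).
  { intros x y Hxy. apply Rnot_lt_le. intros Hlt. apply ln_lt_inv in Hlt; lra. }
  unfold Rpower. rewrite <- exp_plus.
  apply Rnot_lt_le. intros Hlt. apply exp_lt_inv in Hlt. revert Hlt. apply Rle_not_lt.
  destruct (Rle_or_lt 0 e) as [He|He].
  - rewrite Rabs_right by lra.
    assert (ln (sin a) <= ln a) by (apply ln_le; lra). nra.
  - rewrite Rabs_left by lra.
    assert (H := ln_le (a / 2) (sin a) ltac:(lra)).
    unfold Rdiv in H. rewrite ln_mult, ln_Rinv in H by lra. nra.
Qed.

Definition cutoff (s : R) : R := Rpower s (- / 2).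

Lemma cutoff_range s : 1 <= s -> 0 < cutoff s <= 1.
Proof.
  intros Hs. split; [apply Rpower_pos|].
  unfold cutoff. rewrite Rpower_Ropp, <- Rinv_1.
  apply Rinv_le_contravar; [lra|].
  rewrite <- (Rpower_O s) at 1 by lra. apply Rle_Rpower; lra.
Qed.

Lemma Rpower_cutoff s e : Rpower (cutoff s) e = Rpower s (- / 2 * e).
Proof. apply Rpower_mult. Qed.

Definition ibp_integrand (m j : nat) (s th : R) : R :=
  per_bern j (s * cos th) * (trig_eval (sin_weight m j) th * sin th).

Definition decay_bound (m j : nat) : Prop := exists M, forall s, 1 <= s ->
  forall pr : Riemann_integrable (ibp_integrand m j s) (cutoff s) (PI - cutoff s),
  Rabs (RiemannInt pr) <= M * Rpower s (INR j - (INR m + 1) / 2).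

Lemma Rpower_pred s e : 0 < s -> / s * Rpower s e = Rpower s (e - 1).
Proof.
  intros Hs. rewrite <- (Rpower_1 s) at 1 by lra. rewrite <- Rpower_Ropp, <- Rpower_plus.
  f_equal. ring.
Qed.

Lemma ibp_boundary_bound m j s th B : 1 <= s -> (forall x, Rabs (per_bern (S j) x) <= B) ->
  th = cutoff s \/ th = PI - cutoff s ->
  / s * Rabs (per_bern (S j) (s * cos th) * trig_eval (sin_weight m j) th)
  <= B * (coef_abs_sum (sin_weight m j) * Rpower 2 (Rabs (INR m - 1 - 2 * INR j)))
     * Rpower s (INR j - (INR m + 1) / 2).
Proof.
  intros Hs HKB Hth. destruct (cutoff_range s Hs) as [Ha0 Ha1]. assert (HPI := PI2_1).
  set (E := INR m - 1 - 2 * INR j).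
  assert (Hg : Rabs (trig_eval (sin_weight m j) th)
               <= coef_abs_sum (sin_weight m j) * (Rpower 2 (Rabs E) * Rpower s (- / 2 * E))).
  { eapply Rle_trans.
    { apply trig_eval_bound; [apply sin_weight_exp_ge | destruct Hth as [-> | ->]; lra]. }
    replace (sin th) with (sin (cutoff s))
      by (destruct Hth as [-> | ->]; [|rewrite sin_PI_x]; reflexivity).
    rewrite <- Rpower_cutoff.
    apply Rmult_le_compat_l; [apply coef_abs_sum_nonneg | apply Rpower_sin_le; auto]. }
  replace (Rpower s (INR j - (INR m + 1) / 2)) with (/ s * Rpower s (- / 2 * E))
    by (rewrite Rpower_pred by lra; unfold E; f_equal; field).
  assert (HB : 0 <= B) by (eapply Rle_trans; [apply Rabs_pos | apply (HKB 0)]).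
  rewrite Rabs_mult.
  replace (B * (coef_abs_sum (sin_weight m j) * Rpower 2 (Rabs E)) * (/ s * Rpower s (- / 2 * E)))
    with (/ s * (B * (coef_abs_sum (sin_weight m j) * (Rpower 2 (Rabs E) * Rpower s (- / 2 * E)))))
    by ring.
  apply Rmult_le_compat_l; [left; apply Rinv_0_lt_compat; lra|].
  apply Rmult_le_compat; auto using Rabs_pos.
Qed.

Lemma decay_bound_step m j : decay_bound m (S j) -> decay_bound m j.
Proof.
  intros [M' HM']. destruct (per_bern_bounded (S j)) as [B [HB HKB]].
  set (W := coef_abs_sum (sin_weight m j) * Rpower 2 (Rabs (INR m - 1 - 2 * INR j))).
  exists (2 * B * W + M'). intros s Hs pr.
  destruct (cutoff_range s Hs) as [Ha0 Ha1]. assert (HPI := PI2_1).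
  assert (His : 0 < / s) by (apply Rinv_0_lt_compat; lra).
  destruct (ibp_per_bern j s (cutoff s) (PI - cutoff s) (trig_eval (sin_weight m j))
              (fun th => trig_eval (sin_weight m (S j)) th * sin th)) as [pr1 [pr2 Hibp]];
    try lra.
  { intros th Hth. apply trig_eval_derive. lra. }
  { intros th Hth. apply continuity_pt_mult; [apply trig_eval_continuous; lra | apply continuity_sin]. }
  unfold ibp_integrand in pr |- *. rewrite (RiemannInt_P5 pr pr1), Hibp.
  set (T := Rpower s (INR j - (INR m + 1) / 2)).
  assert (H1 := ibp_boundary_bound m j s _ B Hs HKB (or_introl eq_refl)).
  assert (H2 := ibp_boundary_bound m j s _ B Hs HKB (or_intror eq_refl)).
  assert (Hint : / s * Rabs (RiemannInt pr2) <= M' * T).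
  { replace (M' * T) with (/ s * (M' * Rpower s (INR (S j) - (INR m + 1) / 2)))
      by (rewrite <- Rmult_assoc, (Rmult_comm (/ s)), Rmult_assoc, Rpower_pred, S_INR by lra;
          unfold T; f_equal; f_equal; ring).
    apply Rmult_le_compat_l; [lra | apply HM'; auto]. }
  fold W T in H1, H2.
  set (X := per_bern (S j) (s * cos (cutoff s)) * trig_eval (sin_weight m j) (cutoff s)) in *.
  set (Y := per_bern (S j) (s * cos (PI - cutoff s)) * trig_eval (sin_weight m j) (PI - cutoff s)) in *.
  assert (Hxy : / s * Rabs (X - Y) <= / s * (Rabs X + Rabs Y)).
  { apply Rmult_le_compat_l; [lra|]. unfold Rminus. rewrite <- (Rabs_Ropp Y). apply Rabs_triang. }
  eapply Rle_trans; [apply Rabs_triang|].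
  rewrite !Rabs_mult, !(Rabs_right (/ s)) by lra. lra.
Qed.

Lemma sin_ge_on_middle a t : 0 < a <= PI / 2 -> a <= t <= PI - a -> sin a <= sin t.
Proof.
  intros Ha Ht. assert (HP := PI2_Rlt_PI).
  destruct (Rle_or_lt t (PI / 2)) as [Hle|Hgt].
  - apply sin_incr_1; lra.
  - rewrite <- (sin_PI_x t). apply sin_incr_1; lra.
Qed.

Lemma RiemannInt_inv_sin2 a (pr : Riemann_integrable (fun t => / sin t ^ 2) a (PI - a)) :
  0 < a <= PI / 2 -> RiemannInt pr = 2 * cos a / sin a.
Proof.
  intros Ha.
  assert (Hs : forall t, a <= t <= PI - a -> 0 < sin t)
    by (intros t Ht; apply sin_gt_0; assert (HP := PI2_Rlt_PI); lra).
  rewrite (RiemannInt_FTC_open _ (fun t => - cos t / sin t)); [| lra | | |].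
  - rewrite cos_minus, cos_PI, sin_PI, sin_PI_x. field. apply Rgt_not_eq, Hs. lra.
  - intros x Hx. apply continuity_pt_inv; [|apply pow_nonzero, Rgt_not_eq, Hs; auto].
    apply (continuity_pt_comp sin (fun y => y ^ 2));
      [apply continuity_sin | apply derivable_continuous_pt, derivable_pt_pow].
  - intros x Hx. apply continuity_pt_div; [apply continuity_pt_opp, continuity_cos | apply continuity_sin |].
    apply Rgt_not_eq, Hs; auto.
  - intros x Hx. assert (Hsx := Hs x ltac:(lra)).
    replace (/ sin x ^ 2) with ((- - sin x * sin x - cos x * - cos x) / (sin x)²).
    + apply (derivable_pt_lim_div (fun t => - cos t) sin); [| apply derivable_pt_lim_sin | lra].
      apply (derivable_pt_lim_opp cos), derivable_pt_lim_cos.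
    + assert (H1 := sin2_cos2 x). unfold Rsqr in *.
      replace (- - sin x * sin x - cos x * - cos x) with 1 by lra. simpl. field. lra.
Qed.

Lemma Rpower_top_exponent m x : 0 < x ->
  Rpower x (INR m - 1 - 2 * INR (S m)) * x = Rpower x (- INR m) * / x ^ 2.
Proof.
  intros Hx. rewrite <- (Rpower_1 x) at 2 by auto.
  rewrite <- Rpower_pow, <- Rpower_Ropp, <- !Rpower_plus by auto.
  f_equal. rewrite S_INR. simpl. ring.
Qed.

Lemma ibp_integrand_top_bound m s a t B :
  (forall x, Rabs (per_bern (S m) x) <= B) -> 0 < a <= PI / 2 -> a <= t <= PI - a ->
  Rabs (ibp_integrand m (S m) s t)
  <= B * coef_abs_sum (sin_weight m (S m)) * Rpower (sin a) (- INR m) * / sin t ^ 2.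
Proof.
  intros HKB Ha Ht. assert (HP := PI2_Rlt_PI).
  assert (Hsa : 0 < sin a) by (apply sin_gt_0; lra).
  assert (Hat := sin_ge_on_middle a t Ha Ht).
  unfold ibp_integrand. rewrite !Rabs_mult, (Rabs_right (sin t)) by lra.
  assert (Hg := trig_eval_bound (sin_weight m (S m)) _ t (sin_weight_exp_ge m (S m)) ltac:(lra)).
  assert (Hmono : Rpower (sin t) (- INR m) <= Rpower (sin a) (- INR m)).
  { rewrite !Rpower_Ropp. apply Rinv_le_contravar; [apply Rpower_pos|].
    apply Rle_Rpower_l; [apply pos_INR | lra]. }
  apply Rle_trans with (B * (coef_abs_sum (sin_weight m (S m))
                            * (Rpower (sin t) (INR m - 1 - 2 * INR (S m)) * sin t))).
  - apply Rmult_le_compat; auto using Rabs_pos.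
    + apply Rmult_le_pos; [apply Rabs_pos | lra].
    + rewrite <- Rmult_assoc. apply Rmult_le_compat_r; lra.
  - rewrite Rpower_top_exponent by lra.
    assert (0 <= coef_abs_sum (sin_weight m (S m))) by apply coef_abs_sum_nonneg.
    assert (0 <= B) by (eapply Rle_trans; [apply Rabs_pos | apply (HKB 0)]).
    assert (0 < / sin t ^ 2) by (apply Rinv_0_lt_compat, pow_lt; lra).
    rewrite !Rmult_assoc. repeat apply Rmult_le_compat_l; auto.
    apply Rmult_le_compat_r; lra.
Qed.

Lemma cot_cutoff_bound m s : 1 <= s ->
  Rpower (sin (cutoff s)) (- INR m) * (2 * cos (cutoff s) / sin (cutoff s))
  <= 2 * Rpower 2 (INR m + 1) * Rpower s ((INR m + 1) / 2).
Proof.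
  intros Hs. destruct (cutoff_range s Hs) as [Ha0 Ha1]. assert (HPI := PI2_1).
  set (a := cutoff s) in *.
  assert (Hsa : 0 < sin a) by (apply sin_gt_0; lra).
  assert (Hcos := COS_bound a).
  assert (Hm : 0 <= INR m) by apply pos_INR.
  apply Rle_trans with (2 * Rpower (sin a) (- (INR m + 1))).
  - replace (Rpower (sin a) (- (INR m + 1))) with (/ sin a * Rpower (sin a) (- INR m))
      by (rewrite Rpower_pred by lra; f_equal; ring).
    assert (0 < / sin a * Rpower (sin a) (- INR m))
      by (apply Rmult_lt_0_compat; [apply Rinv_0_lt_compat; lra | apply Rpower_pos]).
    unfold Rdiv. nra.
  - rewrite Rmult_assoc. apply Rmult_le_compat_l; [lra|].
    eapply Rle_trans; [apply Rpower_sin_le; auto|].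
    rewrite Rabs_Ropp, Rabs_right by lra.
    unfold a. rewrite Rpower_cutoff. right. f_equal. f_equal. field.
Qed.

Lemma decay_bound_top m : decay_bound m (S m).
Proof.
  destruct (per_bern_bounded (S m)) as [B [HB HKB]].
  set (Sg := coef_abs_sum (sin_weight m (S m))).
  assert (HSg : 0 <= Sg) by apply coef_abs_sum_nonneg.
  exists (2 * B * Sg * Rpower 2 (INR m + 1)). intros s Hs pr.
  destruct (cutoff_range s Hs) as [Ha0 Ha1]. assert (HPI := PI2_1).
  assert (Hsin : forall t, cutoff s <= t <= PI - cutoff s -> 0 < sin t).
  { intros t Ht. assert (sin (cutoff s) <= sin t) by (apply sin_ge_on_middle; lra).
    assert (0 < sin (cutoff s)) by (apply sin_gt_0; lra). lra. }
  assert (prg : Riemann_integrable (fun t => / sin t ^ 2) (cutoff s) (PI - cutoff s)).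
  { apply continuity_implies_RiemannInt; [lra|]. intros t Ht.
    apply continuity_pt_inv; [|apply pow_nonzero, Rgt_not_eq, Hsin; auto].
    apply (continuity_pt_comp sin (fun y => y ^ 2));
      [apply continuity_sin | apply derivable_continuous_pt, derivable_pt_pow]. }
  set (c0 := B * Sg * Rpower (sin (cutoff s)) (- INR m)).
  eapply Rle_trans.
  { apply (RiemannInt_abs_le _ _ _ _ pr (Riemann_integrable_scal c0 prg)); [lra|].
    intros t Ht. apply ibp_integrand_top_bound; auto; lra. }
  rewrite (RiemannInt_scal _ _ _ _ prg), RiemannInt_inv_sin2 by lra.
  replace (INR (S m) - (INR m + 1) / 2) with ((INR m + 1) / 2) by (rewrite S_INR; field).
  assert (H := cot_cutoff_bound m s Hs).
  unfold c0. rewrite Rmult_assoc.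
  replace (2 * B * Sg * Rpower 2 (INR m + 1) * Rpower s ((INR m + 1) / 2))
    with (B * Sg * (2 * Rpower 2 (INR m + 1) * Rpower s ((INR m + 1) / 2))) by ring.
  apply Rmult_le_compat_l; [apply Rmult_le_pos|]; auto.
Qed.

Lemma decay_bound_0 m : decay_bound m 0.
Proof.
  assert (H : forall k, (k <= S m)%nat -> decay_bound m (S m - k)).
  { induction k as [|k IH]; intros Hk.
    - rewrite Nat.sub_0_r. apply decay_bound_top.
    - apply decay_bound_step. replace (S (S m - S k)) with (S m - k)%nat by lia. apply IH; lia. }
  replace 0%nat with (S m - S m)%nat by lia. apply H; lia.
Qed.

Definition saw_integrand (m : nat) (s th : R) : R := saw (s * cos th) * cos th * sin th ^ m.

Lemma saw_integrand_integrable m s : 0 < s ->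
  inhabited (Riemann_integrable (saw_integrand m s) 0 PI).
Proof.
  intros Hs. assert (HP := PI_RGT_0). apply piecewise_continuous_integrable; [lra|].
  intros x0 Hx0. destruct (saw_cos_local s x0 Hs Hx0) as [eta [Heta [nl [nr [HL HR]]]]].
  exists eta. split; auto.
  assert (Hpiece : forall n, continuity (fun th => (s * cos th - n) * cos th * sin th ^ m)).
  { intros n. apply derivable_continuous. reg. }
  exists (fun th => (s * cos th - nr) * cos th * sin th ^ m),
         (fun th => (s * cos th - nl) * cos th * sin th ^ m).
  split; [intros; split; apply Hpiece|].
  split; intros x Hx1 Hx2; unfold saw_integrand; [rewrite HL | rewrite HR]; auto.
Qed.

Lemma saw_integral_sin_small m s u v a (pr : Riemann_integrable (saw_integrand m s) u v) :
  u <= v -> (forall x, u < x < v -> Rabs (sin x) <= a) -> Rabs (RiemannInt pr) <= a ^ m * (v - u).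
Proof.
  intros Huv Ha. apply RiemannInt_abs_const_bound; auto. intros x Hx.
  assert (Hsaw : Rabs (saw (s * cos x)) <= 1) by (destruct (saw_range (s * cos x)); apply Rabs_le; lra).
  assert (Hcos : Rabs (cos x) <= 1) by apply Rabs_le, COS_bound.
  unfold saw_integrand. rewrite !Rabs_mult, <- RPow_abs.
  rewrite <- (Rmult_1_l (a ^ m)). apply Rmult_le_compat; auto using pow_le, Rabs_pos.
  - apply Rmult_le_pos; apply Rabs_pos.
  - rewrite <- (Rmult_1_l 1). apply Rmult_le_compat; auto using Rabs_pos.
  - apply pow_incr. split; [apply Rabs_pos | auto].
Qed.

Lemma saw_integral_small m s (pr : Riemann_integrable (saw_integrand m s) 0 PI) : 0 < s < 1 ->
  Rabs (RiemannInt pr) <= 4 * Rpower s (- ((INR m + 1) / 2)).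
Proof.
  intros Hs. assert (HP := PI_RGT_0). assert (HP4 := PI_4).
  assert (H1 : Rabs (RiemannInt pr) <= 1 ^ m * (PI - 0))
    by (apply saw_integral_sin_small; [lra | intros; apply Rabs_le, SIN_bound]).
  assert (H2 : 1 <= Rpower s (- ((INR m + 1) / 2))).
  { assert (ln s < 0) by (rewrite <- ln_1; apply ln_increasing; lra).
    assert (Hm : 0 < (INR m + 1) / 2) by (assert (H0 := pos_INR m); lra).
    assert (0 < (INR m + 1) / 2 * - ln s) by (apply Rmult_lt_0_compat; lra).
    unfold Rpower. eapply Rle_trans; [|apply exp_ineq1_le]. lra. }
  rewrite pow1 in H1. lra.
Qed.

Lemma saw_integral_split m s (pr : Riemann_integrable (saw_integrand m s) 0 PI) : 1 <= s ->
  exists prF : Riemann_integrable (ibp_integrand m 0 s) (cutoff s) (PI - cutoff s),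
  Rabs (RiemannInt pr) <= 2 * Rpower s (- ((INR m + 1) / 2)) + Rabs (RiemannInt prF).
Proof.
  intros Hs. assert (HP1 := PI2_1).
  destruct (cutoff_range s Hs) as [Ha0 Ha1]. set (a := cutoff s) in *.
  assert (Hae : a ^ m * a = Rpower s (- ((INR m + 1) / 2))).
  { rewrite <- (Rpower_pow m a) by lra. rewrite <- (Rpower_1 a) at 2 by lra.
    rewrite <- Rpower_plus. unfold a. rewrite Rpower_cutoff. f_equal. field. }
  assert (pra := RiemannInt_P22 pr (conj (Rlt_le _ _ Ha0) (ltac:(lra) : a <= PI))).
  assert (prb := RiemannInt_P23 pr (conj (Rlt_le _ _ Ha0) (ltac:(lra) : a <= PI))).
  assert (prm := RiemannInt_P22 prb (conj (ltac:(lra) : a <= PI - a) (ltac:(lra) : PI - a <= PI))).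
  assert (pre := RiemannInt_P23 prb (conj (ltac:(lra) : a <= PI - a) (ltac:(lra) : PI - a <= PI))).
  assert (Hmid : forall x, a <= x <= PI - a -> saw_integrand m s x = ibp_integrand m 0 s x).
  { intros x Hx. unfold saw_integrand, ibp_integrand, per_bern.
    rewrite bern_0, sin_weight_0 by lra. ring. }
  assert (prF : Riemann_integrable (ibp_integrand m 0 s) a (PI - a)).
  { apply (Riemann_integrable_ext (f := saw_integrand m s)); [|exact prm].
    intros x Hx. unfold Rmin, Rmax in Hx. destruct Rle_dec in Hx; [apply Hmid|]; lra. }
  exists prF.
  rewrite <- (RiemannInt_P26 pra prb pr), <- (RiemannInt_P26 prm pre prb).
  rewrite (RiemannInt_P18 prm prF); [| lra | intros x Hx; apply Hmid; lra].
  assert (Hleft : Rabs (RiemannInt pra) <= a ^ m * (a - 0)).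
  { apply saw_integral_sin_small; [lra|]. intros x Hx.
    assert (0 < sin x) by (apply sin_gt_0; lra).
    assert (sin x <= x) by (apply Rlt_le, sin_lt_x; lra). rewrite Rabs_right; lra. }
  assert (Hright : Rabs (RiemannInt pre) <= a ^ m * (PI - (PI - a))).
  { apply saw_integral_sin_small; [lra|]. intros x Hx.
    assert (0 < sin x) by (apply sin_gt_0; lra).
    assert (sin (PI - x) <= PI - x) by (apply Rlt_le, sin_lt_x; lra).
    rewrite sin_PI_x in *. rewrite Rabs_right; lra. }
  replace (a - 0) with a in Hleft by ring. replace (PI - (PI - a)) with a in Hright by ring.
  rewrite Hae in Hleft, Hright.
  eapply Rle_trans; [apply Rabs_triang|]. eapply Rle_trans; [apply Rplus_le_compat_l, Rabs_triang|].
  lra.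
Qed.

Lemma saw_integral_bound m : exists C, forall s, 0 < s ->
  forall pr : Riemann_integrable (saw_integrand m s) 0 PI,
  Rabs (RiemannInt pr) <= C * Rpower s (- ((INR m + 1) / 2)).
Proof.
  destruct (decay_bound_0 m) as [M0 HM0]. exists (4 + Rabs M0).
  intros s Hs pr. assert (Hpos := Rpower_pos s (- ((INR m + 1) / 2))).
  assert (HM0' : M0 <= Rabs M0) by apply RRle_abs.
  rewrite Rmult_plus_distr_r.
  destruct (Rlt_or_le s 1) as [Hs1|Hs1].
  - assert (H := saw_integral_small m s pr (conj Hs Hs1)).
    assert (0 <= Rabs M0 * Rpower s (- ((INR m + 1) / 2)))
      by (apply Rmult_le_pos; [apply Rabs_pos | lra]).
    lra.
  - destruct (saw_integral_split m s pr Hs1) as [prF HF].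
    assert (H := HM0 s Hs1 prF).
    replace (INR 0 - (INR m + 1) / 2) with (- ((INR m + 1) / 2)) in H by (simpl; ring).
    assert (M0 * Rpower s (- ((INR m + 1) / 2)) <= Rabs M0 * Rpower s (- ((INR m + 1) / 2)))
      by (apply Rmult_le_compat_r; lra).
    lra.
Qed.

Lemma integrand_rescale d r delta th : 0 < delta ->
  integrand d r delta th = delta * saw_integrand (d - 2) (r / delta) th.
Proof.
  intros Hdl. unfold integrand, saw_integrand. rewrite Dd_saw by auto.
  replace (r * cos th / delta) with (r / delta * cos th) by (field; lra). ring.
Qed.

Lemma Rpower_rescale r delta k : 0 < r -> 0 < delta ->
  delta * Rpower (r / delta) (- k) = Rpower delta (k + 1) / Rpower r k.
Proof.
  intros Hr Hdl. unfold Rpower, Rdiv.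
  rewrite ln_mult, ln_Rinv, <- exp_Ropp by (try apply Rinv_0_lt_compat; auto).
  rewrite <- (exp_ln delta) at 1 by auto. rewrite <- !exp_plus. f_equal. ring.
Qed.

Theorem lemma6p1 (d : nat) (hd : (2 <= d)%nat) :
  exists C : R,
    forall r delta : R, 0 < r -> 0 < delta ->
      exists pr : Riemann_integrable (integrand d r delta) 0 PI,
        Rabs (RiemannInt pr)
          <= C * Rpower delta ((INR d + 1) / 2) / Rpower r ((INR d - 1) / 2).
Proof.
  destruct (saw_integral_bound (d - 2)) as [C HC]. exists C.
  intros r delta Hr Hdl. assert (HPI := PI_RGT_0).
  set (s := r / delta). assert (Hs : 0 < s) by (apply Rdiv_lt_0_compat; auto).
  destruct (saw_integrand_integrable (d - 2) s Hs) as [prf].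
  assert (prs := Riemann_integrable_scal delta prf).
  assert (pr : Riemann_integrable (integrand d r delta) 0 PI).
  { apply (Riemann_integrable_ext (f := fun th => delta * saw_integrand (d - 2) s th)); [|exact prs].
    intros. rewrite integrand_rescale; auto. }
  exists pr.
  rewrite (RiemannInt_P18 pr prs); [| lra | intros; apply integrand_rescale; auto].
  rewrite (RiemannInt_scal _ _ _ _ prf) by lra.
  replace ((INR d + 1) / 2) with ((INR d - 1) / 2 + 1) by field.
  replace (C * Rpower delta ((INR d - 1) / 2 + 1) / Rpower r ((INR d - 1) / 2))
    with (C * (delta * Rpower s (- ((INR d - 1) / 2))))
    by (unfold s; rewrite Rpower_rescale by auto; unfold Rdiv; ring).
  replace ((INR d - 1) / 2) with ((INR (d - 2) + 1) / 2) by (rewrite minus_INR by lia; simpl; field).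
  rewrite Rabs_mult, (Rabs_right delta) by lra.
  assert (H := HC s Hs prf). nra.
Qed.
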